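(* Let $(A,\mu_A,\alpha_A)$ and $(B,\mu_B,\alpha_B)$ be Hom-associative algebras and $R:B\otimes A\to A\otimes B$ a Hom-twisting map, written $R(b\otimes a)=a_R\otimes b_R$. Define $T:(A\otimes B)\otimes(A\otimes B)\to(A\otimes B)\otimes(A\otimes B)$ by $T((a\otimes b)\otimes(a'\otimes b'))=(a\otimes b_R)\otimes(a'_R\otimes b')$. Then $T$ is a Hom-twistor for the tensor product Hom-associative algebra $(A\otimes B,\mu_{A\otimes B},\alpha_A\otimes\alpha_B)$. Consequently $A\otimes_R B:=(A\otimes B)^T$, with multiplication $(a\otimes b)(a'\otimes b')=aa'_R\otimes b_Rb'$ and structure map $\alpha_A\otimes\alpha_B$, is a Hom-associative algebra.
   Context: Algebras over a field $k$, not assumed unital. A Hom-associative algebra is $(A,\mu,\alpha)$ with $\mu(a\otimes a')=aa'$, $\alpha(aa')=\alpha(a)\alpha(a')$, $\alpha(a)(a'a'')=(aa')\alpha(a'')$. The tensor product of Hom-associative algebras $A,B$ is $A\otimes B$ with $(a\otimes b)(a'\otimes b')=aa'\otimes bb'$ and structure map $\alpha_A\otimes\alpha_B$. A Hom-twisting map between $A$ and $B$ is a linear $R:B\otimes A\to A\otimes B$ with $(\alpha_A\otimes\alpha_B)\circ R=R\circ(\alpha_B\otimes\alpha_A)$, $R\circ(\alpha_B\otimes\mu_A)=(\mu_A\otimes\alpha_B)\circ(\mathrm{id}_A\otimes R)\circ(R\otimes\mathrm{id}_A)$, $R\circ(\mu_B\otimes\alpha_A)=(\alpha_A\otimes\mu_B)\circ(R\otimes\mathrm{id}_B)\circ(\mathrm{id}_B\otimes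 R)$. For a Hom-associative algebra $(D,\mu,\alpha)$ and linear $T:D\otimes D\to D\otimes D$ written $T(d\otimes d')=d^T\otimes d'_T$, let $T_{12}=T\otimes\mathrm{id}$, $T_{23}=\mathrm{id}\otimes T$, $T_{13}(d\otimes d'\otimes d'')=d^T\otimes d'\otimes d''_T$; $T$ is a Hom-twistor if $(\alpha\otimes\alpha)\circ T=T\circ(\alpha\otimes\alpha)$, $T\circ(\alpha\otimes\mu)=(\alpha\otimes\mu)\circ T_{13}\circ T_{12}$, $T\circ(\mu\otimes\alpha)=(\mu\otimes\alpha)\circ T_{13}\circ T_{23}$, $T_{12}\circ T_{23}=T_{23}\circ T_{12}$; and $D^T$ denotes $(D,\mu\circ T,\alpha)$. *)

From HB Require Import structures.
From Stdlib Require Import ClassicalEpsilon.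
From mathcomp Require Import all_boot all_order all_algebra.
From mathcomp Require Import finmap.
From mathcomp Require Import monalg.

Set Implicit Arguments.
Unset Strict Implicit.
Unset Printing Implicit Defensive.

Import GRing.Theory.
Local Open Scope ring_scope.
Local Open Scope quotient_scope.

(* Tensor product U (x) V of two vector spaces over a field K, constructed   *)
(* as the free K-module on U * V modulo the subspace spanned by the         *)
(* bilinearity relations.                                                   *)

Section Tensor.
Variables (K : fieldType) (U V : lmodType K).

Definition tfree := {malg K[(U * V)%type]}.

Definition tgen (u : U) (v : V) : tfree := mkmalgU (u, v) 1.

Inductive tensor_rel : tfree -> Prop :=
  | trel0 : tensor_rel 0
  | trelD x y : tensor_rel x -> tensor_rel y -> tensor_rel (x + y)
  | trelZ (a : K) x : tensor_rel x -> tensor_rel (a *: x)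
  | trelDl u1 u2 v : tensor_rel (tgen (u1 + u2) v - tgen u1 v - tgen u2 v)
  | trelDr u v1 v2 : tensor_rel (tgen u (v1 + v2) - tgen u v1 - tgen u v2)
  | trelZl (a : K) u v : tensor_rel (tgen (a *: u) v - a *: tgen u v)
  | trelZr (a : K) u v : tensor_rel (tgen u (a *: v) - a *: tgen u v).

Definition tensor_relb (x : tfree) : bool :=
  if excluded_middle_informative (tensor_rel x) then true else false.

Lemma tensor_relbP x : reflect (tensor_rel x) (tensor_relb x).
Proof.
rewrite /tensor_relb; case: excluded_middle_informative => h.
  by constructor.
by constructor.
Qed.

Definition tensor_pred : {pred tfree} := tensor_relb.

Lemma tensor_pred_zmod : zmod_closed tensor_pred.
Proof.
split.
  by apply/tensor_relbP; exact: trel0.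
move=> x y /tensor_relbP hx /tensor_relbP hy; apply/tensor_relbP.
apply: trelD => //; rewrite -scaleN1r; exact: trelZ.
Qed.

HB.instance Definition _ := GRing.isZmodClosed.Build tfree tensor_pred
  tensor_pred_zmod.

Import Quotient.

Definition tensor := {quot tensor_pred}.
HB.instance Definition _ := GRing.Zmodule.on tensor.
HB.instance Definition _ := Choice.on tensor.
HB.instance Definition _ : EqQuotient tfree (equiv tensor_pred) tensor :=
  EqQuotient.on tensor.

Definition tscale (a : K) : tensor -> tensor :=
  lift_op1 tensor (fun x => a *: x).

Lemma pi_tscale a : {morph \pi_tensor : x / a *: x >-> tscale a x}.
Proof.
move=> x; rewrite /tscale; unlock; apply/eqP; rewrite piE equivE.
rewrite -scalerBr; apply/tensor_relbP; apply: trelZ; apply/tensor_relbP.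
have := (idealrBE tensor_pred x (repr (\pi_tensor x))).
rewrite reprK eqxx; exact.
Qed.
Canonical pi_tscale_morph a := PiMorph1 (pi_tscale a).

Lemma tscaleA a b v : tscale a (tscale b v) = tscale (a * b) v.
Proof. by rewrite -[v]reprK !piE scalerA. Qed.

Lemma tscale1 : left_id 1 tscale.
Proof. by move=> v; rewrite -[v]reprK !piE scale1r. Qed.

Lemma tscaleDr : right_distributive tscale +%R.
Proof.
by move=> a u v; rewrite -[u]reprK -[v]reprK !piE scalerDr.
Qed.

Lemma tscaleDl v : {morph tscale^~ v : a b / a + b}.
Proof. by move=> a b; rewrite -[v]reprK !piE scalerDl. Qed.

HB.instance Definition _ :=
  GRing.Zmodule_isLmodule.Build K tensor tscaleA tscale1 tscaleDr tscaleDl.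

Definition tens (u : U) (v : V) : tensor := \pi_tensor (tgen u v).

(* For f : U -> V -> W, [tlift f] is the map U (x) V -> W sending         *)
(* u (x) v to f u v (well defined, and linear, as soon as f is bilinear).  *)
Definition tlift (W : lmodType K) (f : U -> V -> W) (t : tensor) : W :=
  let x := repr t in \sum_(p <- msupp x) x@_p *: f p.1 p.2.

End Tensor.

Arguments tens {K U V}.
Arguments tlift {K U V W}.

Definition tmap (K : fieldType) (U V U' V' : lmodType K)
    (f : U -> U') (g : V -> V') : tensor U V -> tensor U' V' :=
  tlift (fun u v => tens (f u) (g v)).

Definition tassoc (K : fieldType) (U V W : lmodType K) :
    tensor (tensor U V) W -> tensor U (tensor V W) :=
  tlift (fun x w => tlift (fun u v => tens u (tens v w)) x).

Definition tassocV (K : fieldType) (U V W : lmodType K) :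
    tensor U (tensor V W) -> tensor (tensor U V) W :=
  tlift (fun u y => tlift (fun v w => tens (tens u v) w) y).

(* mu : A (x) A -> A is given as the bilinear map (a, a') |-> a a'; as a     *)
(* linear map on A (x) A it is [tlift mul].                                  *)

Definition bilinear_map (K : fieldType) (U V W : lmodType K)
    (f : U -> V -> W) : Prop :=
  (forall v, linear (fun u => f u v)) /\ (forall u, linear (f u)).

Definition hom_assoc (K : fieldType) (A : lmodType K)
    (mul : A -> A -> A) (alpha : A -> A) : Prop :=
  [/\ bilinear_map mul, linear alpha,
      (forall a a', alpha (mul a a') = mul (alpha a) (alpha a')) &
      (forall a a' a'', mul (alpha a) (mul a' a'') = mul (mul a a') (alpha a''))].

(* bracketed to the left; associativity isomorphisms are inserted where the *)
(* maps id (x) R etc. require it.                                           *)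
Definition hom_twisting (K : fieldType) (A B : lmodType K)
    (mulA : A -> A -> A) (alphaA : A -> A)
    (mulB : B -> B -> B) (alphaB : B -> B)
    (R : tensor B A -> tensor A B) : Prop :=
  [/\ linear R,
      (forall t, tmap alphaA alphaB (R t) = R (tmap alphaB alphaA t)),
      (forall t : tensor (tensor B A) A,
         R (tmap alphaB (tlift mulA) (tassoc t))
         = tmap (tlift mulA) alphaB
             (tassocV (tmap id R (tassoc (tmap R id t))))) &
      (forall t : tensor (tensor B B) A,
         R (tmap (tlift mulB) alphaA t)
         = tmap alphaA (tlift mulB)
             (tassoc (tmap R id (tassocV (tmap id R (tassoc t))))))].

Definition T12 (K : fieldType) (D : lmodType K)
    (T : tensor D D -> tensor D D) : tensor (tensor D D) D -> tensor (tensor D D) D :=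
  tmap T id.

Definition T23 (K : fieldType) (D : lmodType K)
    (T : tensor D D -> tensor D D) : tensor (tensor D D) D -> tensor (tensor D D) D :=
  fun t => tassocV (tmap id T (tassoc t)).

Definition S23 (K : fieldType) (D : lmodType K) :
    tensor (tensor D D) D -> tensor (tensor D D) D :=
  tlift (fun x d'' => tlift (fun d d' => tens (tens d d'') d') x).

(* T_13 (d (x) d' (x) d'') = d^T (x) d' (x) d''_T *)
Definition T13 (K : fieldType) (D : lmodType K)
    (T : tensor D D -> tensor D D) : tensor (tensor D D) D -> tensor (tensor D D) D :=
  fun t => S23 (T12 T (S23 t)).

Definition hom_twistor (K : fieldType) (D : lmodType K)
    (mul : D -> D -> D) (alpha : D -> D)
    (T : tensor D D -> tensor D D) : Prop :=
  [/\ linear T,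
      (forall t, tmap alpha alpha (T t) = T (tmap alpha alpha t)),
      (forall t : tensor (tensor D D) D,
         T (tmap alpha (tlift mul) (tassoc t))
         = tmap alpha (tlift mul) (tassoc (T13 T (T12 T t)))),
      (forall t : tensor (tensor D D) D,
         T (tmap (tlift mul) alpha t)
         = tmap (tlift mul) alpha (T13 T (T23 T t))) &
      (forall t : tensor (tensor D D) D, T12 T (T23 T t) = T23 T (T12 T t))].

Definition twisted_mul (K : fieldType) (D : lmodType K)
    (mul : D -> D -> D) (T : tensor D D -> tensor D D) : D -> D -> D :=
  fun x y => tlift mul (T (tens x y)).

Definition tensor_mul (K : fieldType) (A B : lmodType K)
    (mulA : A -> A -> A) (mulB : B -> B -> B) :
    tensor A B -> tensor A B -> tensor A B :=
  fun x y => tlift (fun a b => tlift (fun a' b' => tens (mulA a a') (mulB b b')) y) x.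

(* T((a (x) b) (x) (a' (x) b')) = (a (x) b_R) (x) (a'_R (x) b'),            *)
(* where R(b (x) a') = a'_R (x) b_R.                                        *)
Definition twistor_of (K : fieldType) (A B : lmodType K)
    (R : tensor B A -> tensor A B) :
    tensor (tensor A B) (tensor A B) -> tensor (tensor A B) (tensor A B) :=
  tlift (fun x y =>
    tlift (fun a b =>
      tlift (fun a' b' =>
        tlift (fun a'' b'' => tens (tens a b'') (tens a'' b')) (R (tens b a')))
      y) x).

(* Every map in sight is multilinear, so identities between such maps only need to be
   checked on pure tensors, where they are given by explicit formulas: [tlift f] sends
   [u (x) v] to [f u v] as soon as [f] is bilinear, because [f] extended linearly to the
   free module kills the bilinearity relations.  On pure tensors
   [(a1 (x) b1) (x) (a2 (x) b2) (x) (a3 (x) b3)], and after expanding the values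
   [R (b (x) a)] as sums of pure tensors, the alpha-compatibility and the two
   multiplicativity axioms of the twistor [T] become exactly the alpha-compatibility and
   the two axioms of the Hom-twisting map [R], while [T12] and [T23] commute because they
   let [R] act on disjoint pairs of factors.  Finally, for any Hom-twistor [T] of a
   Hom-associative algebra [D], the twistor axioms rewrite both sides of
   [alpha x (y z) = (x y) alpha z] in [D^T] to the same expression in [D]. *)

From mathcomp Require Import all_boot all_order all_algebra.
From mathcomp Require Import finmap monalg.

Set Implicit Arguments.
Unset Strict Implicit.
Unset Printing Implicit Defensive.

Import GRing.Theory.
Local Open Scope fset_scope.
Local Open Scope ring_scope.
Local Open Scope quotient_scope.

Section LinearMaps.
Variables (K : fieldType) (X Y Z : lmodType K).

Section OneMap.
Variables (g : X -> Y) (g_lin : linear g).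

Lemma lin0 : g 0 = 0.
Proof.
have := g_lin 1 0 0; rewrite !scale1r !addr0 => g0E.
by apply: (addrI (g 0)); rewrite -g0E addr0.
Qed.

Lemma linD x y : g (x + y) = g x + g y.
Proof. by have := g_lin 1 x y; rewrite !scale1r. Qed.

Lemma linZ a x : g (a *: x) = a *: g x.
Proof. by have := g_lin a x 0; rewrite !addr0 lin0 addr0. Qed.

Lemma linB x y : g (x - y) = g x - g y.
Proof. by rewrite linD -scaleN1r linZ scaleN1r. Qed.

Lemma lin_sum I (r : seq I) (F : I -> X) :
  g (\sum_(i <- r) F i) = \sum_(i <- r) g (F i).
Proof. by elim: r => [|i r IHr]; rewrite ?big_nil ?lin0 // !big_cons linD IHr. Qed.

End OneMap.

Lemma lin_comp (f : Y -> Z) (g : X -> Y) :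
  linear f -> linear g -> linear (fun x => f (g x)).
Proof. by move=> f_lin g_lin a x y; rewrite g_lin f_lin. Qed.

Lemma lin_id : linear (fun x : X => x).
Proof. by []. Qed.

End LinearMaps.

Section UniversalProperty.
Variables (K : fieldType) (U V W : lmodType K).
Implicit Types (f : U -> V -> W) (x : tfree U V).
Import Quotient.

Definition free_lift f x : W := \sum_(p <- msupp x) x@_p *: f p.1 p.2.

Lemma free_lift_fsub f {x} {S : {fset U * V}} : msupp x `<=` S ->
  free_lift f x = \sum_(p <- S) x@_p *: f p.1 p.2.
Proof.
move=> suppS; apply: big_fset_incl => // p _ /mcoeff_outdom ->.
by rewrite scale0r.
Qed.

Lemma linear_free_lift f : linear (free_lift f).
Proof.
move=> a x y; set S := msupp x `|` msupp y.
have suppZD : msupp (a *: x + y) `<=` S.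
  by apply: fsubset_trans (msuppD_le _ _) _; apply: fsetSU; exact: msuppZ_le.
rewrite (free_lift_fsub _ suppZD) (free_lift_fsub _ (fsubsetUl _ (msupp y))).
rewrite (free_lift_fsub _ (fsubsetUr (msupp x) _)) scaler_sumr -big_split /=.
by apply: eq_bigr => p _; rewrite mcoeffD mcoeffZ scalerDl scalerA.
Qed.

Lemma free_lift_gen f u v : free_lift f (tgen u v) = f u v.
Proof.
by rewrite (free_lift_fsub _ msuppU_le) big_seq_fset1 mcoeffUU scale1r.
Qed.

Lemma free_lift_rel f : bilinear_map f -> forall x, tensor_rel x -> free_lift f x = 0.
Proof.
move=> [f_linl f_linr] x; have lift_lin := linear_free_lift f.
elim=> {x} [|x y _ hx _ hy|a x _ hx|u1 u2 v|u v1 v2|a u v|a u v];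
  rewrite ?(lin0 lift_lin) ?(linB lift_lin) ?(linD lift_lin) ?(linZ lift_lin).
- by [].
- by rewrite hx hy addr0.
- by rewrite hx scaler0.
- by rewrite !free_lift_gen (linD (f_linl v)) addrAC addrK subrr.
- by rewrite !free_lift_gen (linD (f_linr u)) addrAC addrK subrr.
- by rewrite !free_lift_gen (linZ (f_linl v)) subrr.
- by rewrite !free_lift_gen (linZ (f_linr u)) subrr.
Qed.

Lemma linear_pi : linear (\pi_(tensor U V) : tfree U V -> tensor U V).
Proof. by move=> a x y; rewrite !piE. Qed.

Lemma pi_eq x y : tensor_rel (x - y) -> \pi_(tensor U V) x = \pi y.
Proof.
by move=> /tensor_relbP xy; apply/eqP; rewrite piE equivE.
Qed.

Lemma tlift_pi f : bilinear_map f -> forall x, tlift f (\pi_(tensor U V) x) = free_lift f x.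
Proof.
move=> f_bil x; have : repr (\pi_(tensor U V) x) - x \in @tensor_pred K U V.
  by rewrite idealrBE reprK.
move=> /tensor_relbP /(free_lift_rel f_bil) /eqP.
by rewrite (linB (linear_free_lift f)) subr_eq0 => /eqP.
Qed.

Lemma tlift_tens f : bilinear_map f -> forall u v, tlift f (tens u v) = f u v.
Proof. by move=> f_bil u v; rewrite /tens tlift_pi ?free_lift_gen. Qed.

Lemma linear_tlift f : bilinear_map f -> linear (tlift f).
Proof.
move=> f_bil a s t; rewrite -[s]reprK -[t]reprK -linear_pi !tlift_pi //.
exact: linear_free_lift.
Qed.

Lemma eq_tlift f g t : (forall u v, f u v = g u v) -> tlift f t = tlift g t.
Proof. by move=> fg; apply: eq_bigr => p _; rewrite fg. Qed.

Lemma tlift_scale_add a f g t :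
  tlift (fun u v => a *: f u v + g u v) t = a *: tlift f t + tlift g t.
Proof.
rewrite /tlift scaler_sumr -big_split /=; apply: eq_bigr => p _.
by rewrite scalerDr !scalerA mulrC.
Qed.

End UniversalProperty.

Section PureTensors.
Variables (K : fieldType) (U V : lmodType K).

Lemma bilinear_tens : bilinear_map (@tens K U V).
Proof.
have rel_eq (x c d e : tfree U V) : tensor_rel (x - c - e) -> tensor_rel (c - d) ->
    tensor_rel (x - (d + e)).
  by move=> xce cd; have := trelD xce cd; rewrite addrAC addrA subrK opprD addrA.
split=> [v|u] a x y; rewrite /tens -linear_pi; apply: pi_eq.
- exact: (rel_eq _ (tgen (a *: x) v) _ _ (trelDl _ _ _) (trelZl _ _ _)).
- exact: (rel_eq _ (tgen u (a *: x)) _ _ (trelDr _ _ _) (trelZr _ _ _)).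
Qed.

Lemma tlift_tens_id (t : tensor U V) : tlift tens t = t.
Proof.
rewrite -[t in RHS]reprK [repr t]monalgE (lin_sum (@linear_pi K U V)).
apply: eq_bigr => -[u v] _; rewrite /tens -(linZ (@linear_pi K U V)); congr (\pi _).
by apply/malgP => k; rewrite mcoeffZ !mcoeffU; case: eqP; rewrite ?mulr1n ?mulr0n ?mulr1 ?mulr0.
Qed.

End PureTensors.

Section TensorExt.
Variables (K : fieldType) (U V W : lmodType K).

Lemma linear_tlift_tens (g : tensor U V -> W) : linear g ->
  forall t, g t = tlift (fun u v => g (tens u v)) t.
Proof.
move=> g_lin t; rewrite -{1}(tlift_tens_id t) /tlift (lin_sum g_lin).
by apply: eq_bigr => p _; rewrite (linZ g_lin).
Qed.

Lemma tensor_ext (g h : tensor U V -> W) : linear g -> linear h ->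
  (forall u v, g (tens u v) = h (tens u v)) -> forall t, g t = h t.
Proof.
move=> g_lin h_lin gh t.
by rewrite (linear_tlift_tens g_lin) (linear_tlift_tens h_lin); apply: eq_tlift.
Qed.

End TensorExt.

Section TensorMaps.
Variable K : fieldType.
Implicit Types U V W X : lmodType K.

Lemma linear_tensl U V (v : V) : linear (fun u : U => tens u v).
Proof. exact: (bilinear_tens U V).1. Qed.

Lemma linear_tensr U V (u : U) : linear (@tens K U V u).
Proof. exact: (bilinear_tens U V).2. Qed.

Lemma linear_tlift_fun X U V W (F : X -> U -> V -> W) t :
  (forall u v, linear (fun x => F x u v)) -> linear (fun x => tlift (F x) t).
Proof. by move=> F_lin a x y; rewrite -tlift_scale_add; apply: eq_tlift => u v; apply: F_lin. Qed.

Lemma bilinear_tens_map U V (U' V' : lmodType K) (f : U -> U') (g : V -> V') :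
  linear f -> linear g -> bilinear_map (fun u v => tens (f u) (g v)).
Proof.
move=> f_lin g_lin; split=> [v|u].
  exact: (lin_comp (linear_tensl (g v)) f_lin).
exact: (lin_comp (linear_tensr (f u)) g_lin).
Qed.

End TensorMaps.

Ltac linear_step :=
  cbv beta; match goal with
  | H : bilinear_map ?F |- bilinear_map ?F => exact: H
  | |- bilinear_map _ => split=> ?
  | H : linear ?F |- linear ?F => exact: H
  | |- linear (fun x => x) => exact: lin_id
  | |- linear id => exact: lin_id
  | |- linear (tens _) => exact: linear_tensr
  | |- linear (fun x => tens x _) => exact: linear_tensl
  | |- linear (fun x => tens (@?g x) ?v) => apply: (lin_comp (linear_tensl v))
  | |- linear (tlift _) => apply: linear_tlift
  | |- linear (fun x => tlift (@?F x) _) => apply: linear_tlift_fun => ? ?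
  | H : bilinear_map ?F |- linear (?F _) => exact: H.2
  | H : bilinear_map ?F |- linear (fun x => ?F x ?v) => exact: H.1 v
  | H : bilinear_map ?F |- linear (fun x => ?F (@?g x) ?v) => apply: (lin_comp (H.1 v))
  | |- linear (fun x => ?F (@?g x)) => apply: (lin_comp (f := F))
  end.

Section StructureMaps.
Variable K : fieldType.
Implicit Types U V W X : lmodType K.

Lemma linear_tmap U V (U' V' : lmodType K) (f : U -> U') (g : V -> V') :
  linear f -> linear g -> linear (tmap f g).
Proof. by move=> f_lin g_lin; apply: linear_tlift; exact: bilinear_tens_map. Qed.

Lemma tmap_tens U V (U' V' : lmodType K) (f : U -> U') (g : V -> V') :
  linear f -> linear g -> forall u v, tmap f g (tens u v) = tens (f u) (g v).
Proof. by move=> f_lin g_lin u v; rewrite /tmap tlift_tens //; exact: bilinear_tens_map. Qed.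

Lemma linear_tassoc U V W : linear (@tassoc K U V W).
Proof. by rewrite /tassoc; repeat linear_step. Qed.

Lemma tassoc_tens U V W (u : U) (v : V) (w : W) :
  tassoc (tens (tens u v) w) = tens u (tens v w).
Proof. by rewrite /tassoc !tlift_tens //; repeat linear_step. Qed.

Lemma linear_tassocV U V W : linear (@tassocV K U V W).
Proof. by rewrite /tassocV; repeat linear_step. Qed.

Lemma tassocV_tens U V W (u : U) (v : V) (w : W) :
  tassocV (tens u (tens v w)) = tens (tens u v) w.
Proof. by rewrite /tassocV !tlift_tens //; repeat linear_step. Qed.

End StructureMaps.

Ltac linear_tac :=
  repeat (cbv beta; first
    [ match goal with
      | |- linear (tmap _ _) => apply: linear_tmap
      | |- linear (@tassoc _ _ _ _) => exact: linear_tassoc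
      | |- linear (@tassocV _ _ _ _) => exact: linear_tassocV
      | |- linear _ => progress unfold S23, T12, T23, T13, tensor_mul, twistor_of
      | |- bilinear_map _ => progress unfold tensor_mul
      end
    | linear_step ]).

Section Extensionality.
Variable K : fieldType.
Implicit Types U V W X Y : lmodType K.

Lemma tensor3_ext U V W Y (g h : tensor (tensor U V) W -> Y) : linear g -> linear h ->
  (forall u v w, g (tens (tens u v) w) = h (tens (tens u v) w)) -> forall t, g t = h t.
Proof.
move=> g_lin h_lin gh; apply: tensor_ext => // x w; move: x.
by apply: tensor_ext; linear_tac.
Qed.

Lemma tassocK U V W : cancel (@tassocV K U V W) (@tassoc K U V W).
Proof.
apply: tensor_ext; linear_tac; move=> u y; move: y.
by apply: tensor_ext; linear_tac; move=> v w; rewrite tassocV_tens tassoc_tens.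
Qed.

End Extensionality.

Section Twistor.
Variables (K : fieldType) (D : lmodType K) (T : tensor D D -> tensor D D).
Hypothesis T_lin : linear T.

Lemma S23_tens (d d' d'' : D) : S23 (tens (tens d d') d'') = tens (tens d d'') d'.
Proof. by rewrite /S23 !tlift_tens //; linear_tac. Qed.

Lemma T12_tens x (z : D) : T12 T (tens x z) = tens (T x) z.
Proof. by rewrite /T12 tmap_tens //; linear_tac. Qed.

Lemma T23_tens (x y z : D) : T23 T (tens (tens x y) z) = tassocV (tens x (T (tens y z))).
Proof. by rewrite /T23 tassoc_tens tmap_tens //; linear_tac. Qed.

Lemma T13_tens (x y z : D) : T13 T (tens (tens x y) z) = S23 (tens (T (tens x z)) y).
Proof. by rewrite /T13 [in T12 T _]S23_tens T12_tens. Qed.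

End Twistor.

Section TensorAlgebra.
Variables (K : fieldType) (A B : lmodType K).

Lemma tensor_mul_tens (mulA : A -> A -> A) (mulB : B -> B -> B) :
  bilinear_map mulA -> bilinear_map mulB -> forall a b a' b',
  tensor_mul mulA mulB (tens a b) (tens a' b') = tens (mulA a a') (mulB b b').
Proof. by move=> mulA_bil mulB_bil a b a' b'; rewrite /tensor_mul !tlift_tens //; linear_tac. Qed.

Lemma twistor_of_tens (R : tensor B A -> tensor A B) : linear R -> forall a b a' b',
  twistor_of R (tens (tens a b) (tens a' b'))
  = tlift (fun a'' b'' => tens (tens a b'') (tens a'' b')) (R (tens b a')).
Proof. by move=> R_lin a b a' b'; rewrite /twistor_of !tlift_tens //; linear_tac. Qed.

End TensorAlgebra.

(* Redexes are located by syntactic matching: [rewrite] with these equations would try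
   to unify their left-hand sides with unrelated subterms up to conversion, unfolding
   the quotient construction of [tensor], which does not terminate in practice. *)
Ltac rewrite_subterm t e := pattern t; refine (eq_ind_r _ _ e); cbv beta.

Ltac tensor_simpl_step :=
  match goal with |- context [?t] =>
    match t with
    | tassoc (tens (tens ?u ?v) ?w) => rewrite_subterm t (tassoc_tens u v w)
    | tassocV (tens ?u (tens ?v ?w)) => rewrite_subterm t (tassocV_tens u v w)
    | S23 (tens (tens ?u ?v) ?w) => rewrite_subterm t (S23_tens u v w)
    | tmap ?f ?g (tens ?u ?v) =>
        rewrite_subterm t (tmap_tens (f := f) (g := g)
                             ltac:(by linear_tac) ltac:(by linear_tac) u v)
    | tlift ?f (tens ?u ?v) =>
        rewrite_subterm t (tlift_tens (f := f) ltac:(by linear_tac) u v)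
    | T12 ?T (tens ?x ?z) =>
        rewrite_subterm t (T12_tens (T := T) ltac:(by linear_tac) x z)
    | T23 ?T (tens (tens ?x ?y) ?z) =>
        rewrite_subterm t (T23_tens (T := T) ltac:(by linear_tac) x y z)
    | T13 ?T (tens (tens ?x ?y) ?z) =>
        rewrite_subterm t (T13_tens (T := T) ltac:(by linear_tac) x y z)
    | tensor_mul ?mA ?mB (tens ?a ?b) (tens ?a' ?b') =>
        rewrite_subterm t (tensor_mul_tens (mulA := mA) (mulB := mB)
                             ltac:(by linear_tac) ltac:(by linear_tac) a b a' b')
    | twistor_of ?R (tens (tens ?a ?b) (tens ?a' ?b')) =>
        rewrite_subterm t (twistor_of_tens (R := R) ltac:(by linear_tac) a b a' b')
    end
  end.

Ltac tensor_simpl := repeat tensor_simpl_step.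

Lemma twisted_hom_assoc (K : fieldType) (D : lmodType K) (mul : D -> D -> D)
    (alpha : D -> D) (T : tensor D D -> tensor D D) :
  hom_assoc mul alpha -> hom_twistor mul alpha T ->
  hom_assoc (twisted_mul mul T) alpha.
Proof.
move=> [mul_bil alpha_lin alpha_mul mul_assoc] [T_lin T_alpha T_mulr T_mull T_comm].
split; [| exact: alpha_lin | |]; rewrite /twisted_mul.
- by linear_tac.
- move=> x y; have -> : alpha (tlift mul (T (tens x y)))
                        = tlift mul (tmap alpha alpha (T (tens x y))).
    move: (T (tens x y)); apply: tensor_ext; linear_tac; move=> u v.
    by tensor_simpl; exact: alpha_mul.
  by rewrite T_alpha; tensor_simpl.
- move=> x y z.
  have -> : tens (alpha x) (tlift mul (T (tens y z)))
          = tmap alpha (tlift mul) (tassoc (T23 T (tens (tens x y) z))).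
    by rewrite T23_tens // tassocK; tensor_simpl.
  have -> : tens (tlift mul (T (tens x y))) (alpha z)
          = tmap (tlift mul) alpha (T12 T (tens (tens x y) z)).
    by tensor_simpl.
  rewrite T_mulr T_mull -T_comm; move: (T13 T (T12 T (T23 T (tens (tens x y) z)))).
  by apply: tensor3_ext; linear_tac; move=> u v w; tensor_simpl; rewrite mul_assoc.
Qed.

Section PureTensorExt.
Variables (K : fieldType) (U V W : lmodType K).

Lemma tensor_tens2_ext (g h : tensor (tensor U V) (tensor U V) -> W) :
  linear g -> linear h ->
  (forall a b a' b', g (tens (tens a b) (tens a' b')) = h (tens (tens a b) (tens a' b'))) ->
  forall t, g t = h t.
Proof.
move=> g_lin h_lin gh; apply: tensor_ext => // x y; move: x.
apply: tensor_ext; linear_tac; move=> a b; move: y.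
by apply: tensor_ext; linear_tac.
Qed.

Lemma tensor_tens3_ext
    (g h : tensor (tensor (tensor U V) (tensor U V)) (tensor U V) -> W) :
  linear g -> linear h ->
  (forall a1 b1 a2 b2 a3 b3,
     g (tens (tens (tens a1 b1) (tens a2 b2)) (tens a3 b3))
     = h (tens (tens (tens a1 b1) (tens a2 b2)) (tens a3 b3))) ->
  forall t, g t = h t.
Proof.
move=> g_lin h_lin gh; apply: tensor3_ext => // x y z; move: x.
apply: tensor_ext; linear_tac; move=> a1 b1; move: y.
apply: tensor_ext; linear_tac; move=> a2 b2; move: z.
by apply: tensor_ext; linear_tac.
Qed.

End PureTensorExt.

Lemma tensor_hom_assoc (K : fieldType) (A B : lmodType K)
    (mulA : A -> A -> A) (alphaA : A -> A) (mulB : B -> B -> B) (alphaB : B -> B) :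
  hom_assoc mulA alphaA -> hom_assoc mulB alphaB ->
  hom_assoc (tensor_mul mulA mulB) (tmap alphaA alphaB).
Proof.
move=> [mulA_bil alphaA_lin alphaA_mul mulA_assoc] [mulB_bil alphaB_lin alphaB_mul mulB_assoc].
split; [by linear_tac | by linear_tac | |].
- move=> x y; move: x; apply: tensor_ext; linear_tac; move=> a b; move: y.
  apply: tensor_ext; linear_tac; move=> a' b'.
  by tensor_simpl; rewrite alphaA_mul alphaB_mul.
- move=> x y z; move: x; apply: tensor_ext; linear_tac; move=> a b; move: y.
  apply: tensor_ext; linear_tac; move=> a' b'; move: z.
  apply: tensor_ext; linear_tac; move=> a'' b''.
  by tensor_simpl; rewrite mulA_assoc mulB_assoc.
Qed.

Section TwistedTensorProduct.
Variables (K : fieldType) (A B : lmodType K).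
Variables (mulA : A -> A -> A) (alphaA : A -> A) (mulB : B -> B -> B) (alphaB : B -> B).
Variable R : tensor B A -> tensor A B.
Hypotheses (mulA_bil : bilinear_map mulA) (alphaA_lin : linear alphaA).
Hypotheses (mulB_bil : bilinear_map mulB) (alphaB_lin : linear alphaB).
Hypothesis R_twisting : hom_twisting mulA alphaA mulB alphaB R.

Let R_lin : linear R.
Proof. by case: R_twisting. Qed.

Local Notation mulD := (tensor_mul mulA mulB).
Local Notation alphaD := (tmap alphaA alphaB).
Local Notation T := (twistor_of R).

Lemma twisting_alpha_tens b a :
  R (tens (alphaB b) (alphaA a)) = alphaD (R (tens b a)).
Proof. by case: R_twisting => _ R_alpha _ _; rewrite R_alpha; tensor_simpl. Qed.

Lemma twisting_mulA_tens b a a' :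
  R (tens (alphaB b) (mulA a a'))
  = tmap (tlift mulA) alphaB (tassocV (tmap id R (tassoc (tens (R (tens b a)) a')))).
Proof.
case: R_twisting => _ _ R_mulA _; have := R_mulA (tens (tens b a) a').
by tensor_simpl; move=> ->; tensor_simpl.
Qed.

Lemma twisting_mulB_tens b b' a :
  R (tens (mulB b b') (alphaA a))
  = tmap alphaA (tlift mulB) (tassoc (tmap R id (tassocV (tens b (R (tens b' a)))))).
Proof.
case: R_twisting => _ _ _ R_mulB; have := R_mulB (tens (tens b b') a).
by tensor_simpl; move=> ->; tensor_simpl.
Qed.

Lemma twistor_of_alpha t : tmap alphaD alphaD (T t) = T (tmap alphaD alphaD t).
Proof.
move: t; apply: tensor_tens2_ext; linear_tac; move=> a1 b1 a2 b2.
tensor_simpl; rewrite twisting_alpha_tens.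
move: (R (tens b1 a2)); apply: tensor_ext; linear_tac; move=> a b.
by tensor_simpl.
Qed.

Lemma twistor_of_mulr t : T (tmap alphaD (tlift mulD) (tassoc t))
  = tmap alphaD (tlift mulD) (tassoc (T13 T (T12 T t))).
Proof.
move: t; apply: tensor_tens3_ext; linear_tac; move=> a1 b1 a2 b2 a3 b3.
tensor_simpl; rewrite twisting_mulA_tens.
move: (R (tens b1 a2)); apply: tensor_ext; linear_tac; move=> a b; tensor_simpl.
move: (R (tens b a3)); apply: tensor_ext; linear_tac; move=> a' b'.
by tensor_simpl.
Qed.

Lemma twistor_of_mull t : T (tmap (tlift mulD) alphaD t)
  = tmap (tlift mulD) alphaD (T13 T (T23 T t)).
Proof.
move: t; apply: tensor_tens3_ext; linear_tac; move=> a1 b1 a2 b2 a3 b3.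
tensor_simpl; rewrite twisting_mulB_tens.
move: (R (tens b2 a3)); apply: tensor_ext; linear_tac; move=> a b; tensor_simpl.
move: (R (tens b1 a)); apply: tensor_ext; linear_tac; move=> a' b'.
by tensor_simpl.
Qed.

Lemma twistor_of_comm t : T12 T (T23 T t) = T23 T (T12 T t).
Proof.
move: t; apply: tensor_tens3_ext; linear_tac; move=> a1 b1 a2 b2 a3 b3.
(* Both sides expand to the sum over independent expansions of [R (b1 (x) a2)] and
   [R (b2 (x) a3)]. *)
transitivity (tlift (fun p q => tlift (fun p' q' =>
    tens (tens (tens a1 q') (tens p' q)) (tens p b3)) (R (tens b1 a2))) (R (tens b2 a3))).
  tensor_simpl; move: (R (tens b2 a3)); apply: tensor_ext; linear_tac; move=> p q.
  tensor_simpl; move: (R (tens b1 a2)); apply: tensor_ext; linear_tac; move=> p' q'.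
  by tensor_simpl.
tensor_simpl; move: (R (tens b1 a2)); apply: tensor_ext; linear_tac; move=> p' q'.
tensor_simpl; move: (R (tens b2 a3)); apply: tensor_ext; linear_tac; move=> p q.
by tensor_simpl.
Qed.

Lemma hom_twistor_twistor_of : hom_twistor mulD alphaD T.
Proof.
split; [by linear_tac | exact: twistor_of_alpha | exact: twistor_of_mulr
       | exact: twistor_of_mull | exact: twistor_of_comm].
Qed.

Lemma twisted_tensor_mul_tens a b a' b' :
  twisted_mul mulD T (tens a b) (tens a' b')
  = tlift (fun a'' b'' => tens (mulA a a'') (mulB b'' b')) (R (tens b a')).
Proof.
rewrite /twisted_mul; tensor_simpl.
move: (R (tens b a')); apply: tensor_ext; linear_tac; move=> a'' b''.
by tensor_simpl.
Qed.

End TwistedTensorProduct.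

Theorem proposition2p6 (K : fieldType) (A B : lmodType K)
    (mulA : A -> A -> A) (alphaA : A -> A)
    (mulB : B -> B -> B) (alphaB : B -> B)
    (R : tensor B A -> tensor A B) :
  hom_assoc mulA alphaA ->
  hom_assoc mulB alphaB ->
  hom_twisting mulA alphaA mulB alphaB R ->
  [/\ hom_twistor (tensor_mul mulA mulB) (tmap alphaA alphaB) (twistor_of R),
      hom_assoc (twisted_mul (tensor_mul mulA mulB) (twistor_of R))
                (tmap alphaA alphaB) &
      (forall a b a' b',
         twisted_mul (tensor_mul mulA mulB) (twistor_of R) (tens a b) (tens a' b')
         = tlift (fun a'' b'' => tens (mulA a a'') (mulB b'' b')) (R (tens b a')))].
Proof.
move=> A_hom B_hom R_twisting.
have [mulA_bil alphaA_lin _ _] := A_hom; have [mulB_bil alphaB_lin _ _] := B_hom.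
have T_twistor := hom_twistor_twistor_of mulA_bil alphaA_lin mulB_bil alphaB_lin R_twisting.
split; first exact: T_twistor.
- exact: twisted_hom_assoc (tensor_hom_assoc A_hom B_hom) T_twistor.
- exact: twisted_tensor_mul_tens mulA_bil mulB_bil R_twisting.
Qed.
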